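(* Let $\phi:[0,1]\to[0,1]$ be concave with $\phi(0)=0$, $\phi(1)=1$ and continuous at $0$. Then for every measurable $X$, \[ \|X\|_{TM_\phi}=\sup_{0<t<1}\left\{\frac{1-\phi(1-t)}{t}\,\mathbb{E}[|X|]+\left(1-\frac{1-\phi(1-t)}{t}\right)\operatorname{CVar}_t(|X|)\right\}=\sup_{0<t<1}\operatorname{RIM}_{t,\beta(t)}(|X|), \] where $\beta(t)=\frac{1-\phi(1-t)}{t}$ and $\operatorname{RIM}_{\alpha,\beta}(Z)=\beta\,\mathbb{E}[Z]+(1-\beta)\operatorname{CVar}_\alpha(Z)$.
   Context: $\Omega=[0,1]$ with Lebesgue measure $\mu$; $X^*(\omega)=\inf\{\lambda\ge0:\mu\{|X|>\lambda\}\le\omega\}$; $\mathbb{E}[|X|]=\int_0^1X^*\,d\omega$; for $Z\ge0$, $\operatorname{CVar}_\alpha(Z)=\frac{1}{1-\alpha}\int_0^{1-\alpha}Z^*(\omega)\,d\omega$. The positive translation equivariant Marcinkiewicz norm is $\|X\|_{TM_\phi}=\sup_{0<t<1}\{\frac{\phi(t)}{t}\int_0^tX^*\,d\omega+\frac{\phi(t)-1}{t-1}\int_t^1X^*\,d\omega\}$. *)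

From HB Require Import structures.
From mathcomp Require Import all_boot all_order all_algebra.
From mathcomp Require Import all_classical all_reals all_analysis.
Set Implicit Arguments. Unset Strict Implicit. Unset Printing Implicit Defensive.
Import Order.TTheory GRing.Theory Num.Theory.
Import numFieldNormedType.Exports.
Local Open Scope classical_set_scope.
Local Open Scope ring_scope.

(* Omega = [0,1] with the Lebesgue measure (restriction of lebesgue_measure). *)

Definition distrib (R : realType) (X : R -> R) (l : R) : \bar R :=
  (@lebesgue_measure R) (`[0, 1] `&` [set w | l < `|X w|]).

(* decreasing rearrangement X^*(w) = inf{ l >= 0 : mu{|X|>l} <= w } (value in \bar R,
   +oo when the set is empty) *)
Definition rearr (R : realType) (X : R -> R) (w : R) : \bar R :=
  ereal_inf [set l%:E | l in [set l : R | 0 <= l /\ (distrib X l <= w%:E)%E]].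

Definition int_rearr (R : realType) (X : R -> R) (a b : R) : \bar R :=
  (\int[@lebesgue_measure R]_(w in `[a, b]%classic) rearr X w)%E.

Definition expect (R : realType) (Z : R -> R) : \bar R :=
  (\int[@lebesgue_measure R]_(w in `[0%R, 1%R]%classic) (Z w)%:E)%E.

Definition CVar (R : realType) (alpha : R) (Z : R -> R) : \bar R :=
  (((1 - alpha)^-1)%:E * int_rearr Z 0 (1 - alpha))%E.

Definition RIM (R : realType) (alpha beta : R) (Z : R -> R) : \bar R :=
  (beta%:E * expect Z + (1 - beta)%:E * CVar alpha Z)%E.

Definition TM_norm (R : realType) (phi : R -> R) (X : R -> R) : \bar R :=
  ereal_sup [set ((phi t / t)%:E * int_rearr X 0 t
                  + ((phi t - 1) / (t - 1))%:E * int_rearr X t 1)%E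
            | t in `]0, 1[%classic].

Definition beta_of (R : realType) (phi : R -> R) (t : R) : R := (1 - phi (1 - t)) / t.

From HB Require Import structures.
From mathcomp Require Import all_boot all_order all_algebra.
From mathcomp Require Import all_classical all_reals all_analysis.
From mathcomp Require Import measurable_realfun ring.
Import Order.TTheory GRing.Theory Num.Theory.
Import numFieldNormedType.Exports.
Local Open Scope classical_set_scope.
Local Open Scope ring_scope.

(* The decreasing rearrangement X^* is equimeasurable with |X|: both have the
   distribution function l |-> mu{|X| > l}.  The layer-cake formula therefore
   gives E|X| = \int_0^1 X^*.  Splitting this integral at t, the t-th term of
   the Marcinkiewicz norm becomes b E|X| + (1 - b) CVar_{1-t}|X| with
   b = (1 - phi t)/(1 - t) = beta(1 - t), and the substitution t |-> 1 - t
   turns one supremum into the other.  Concavity gives t <= phi t <= 1, i.e.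
   0 <= b <= 1; this sign information is what makes the computation valid in
   the extended reals when E|X| = +oo. *)

Lemma nonincreasing_in_measurable (R : realType) (D : set R) (f : R -> R) :
  measurable D -> is_interval D -> {in D &, nonincreasing_fun f} ->
  measurable_fun D f.
Proof.
move=> mD iD f_ni.
apply: (measurability (@RGenCInfty.G R)) => [|/= _ [_] [r] -> <-].
  exact: RGenCInfty.measurableE.
apply: is_interval_measurable => s t/= [Ds fs] [Dt ft] u /andP[su ut].
have Du : D u by apply: (iD s t) => //; rewrite su ut.
split => //; move: fs ft; rewrite /= !in_itv/= !andbT => fs ft.
by rewrite (le_trans ft)// f_ni ?inE.
Qed.

Lemma ge0_expectation_eq_ccdf d (T : measurableType d) (R : realType)
    (P : probability T R) (Y Z : {RV P >-> R}) :
  (forall x, 0 <= Y x) -> (forall x, 0 <= Z x) ->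
  (forall r, 0 <= r -> ccdf Y r = ccdf Z r) -> ('E_P[Y] = 'E_P[Z])%E.
Proof.
move=> Y0 Z0 YZ; rewrite !ge0_expectation_ccdf//; apply: eq_integral => r.
by rewrite inE/= in_itv/= andbT => /YZ.
Qed.

Section uniform01.
Context {R : realType}.
Local Notation mu := (@lebesgue_measure R).

Definition unif01 := uniform_prob (@ltr01 R).

Lemma unif01E (A : set R) : measurable A -> unif01 A = mu (A `&` `[0, 1]).
Proof.
move=> mA; rewrite /unif01 /uniform_prob integral_uniform_pdf.
rewrite (eq_integral (cst 1%:E)); last first.
  move=> x; rewrite inE => -[_]; rewrite /= in_itv/= /uniform_pdf => ->.
  by rewrite subr0 invr1.
by rewrite integral_cst ?mul1e//; apply: measurableI.
Qed.

Lemma ge0_expectation_unif01 (f : {RV unif01 >-> R}) : (forall x, 0 <= f x) ->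
  ('E_unif01[f] = \int[mu]_(x in `[0%R, 1%R]) (f x)%:E)%E.
Proof.
move=> f0; rewrite expectation_def integral_uniform//=; last exact/measurable_EFinP.
by rewrite subr0 invr1 mul1e.
Qed.

End uniform01.

Section rearrangement.
Context {R : realType} (X : R -> R).
Local Notation mu := (@lebesgue_measure R).

Lemma int_rearr_abs : int_rearr (fun w => `|X w|) = int_rearr X.
Proof.
rewrite /int_rearr /rearr; suff -> : distrib (fun w => `|X w|) = distrib X by [].
apply/funext => l; rewrite /distrib; congr (_ (_ `&` _)).
by apply/funext => w /=; rewrite normr_id.
Qed.

Lemma rearr_ge0 w : (0 <= rearr X w)%E.
Proof. by apply/ereal_infP => _ [l [l0 _] <-]; rewrite lee_fin. Qed.

Lemma rearr_le w l : 0 <= l -> (distrib X l <= w%:E)%E -> (rearr X w <= l%:E)%E.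
Proof. by move=> l0 dl; apply: ge_ereal_inf; exists l%:E => //; exists l. Qed.

Lemma rearr_nonincreasing : nonincreasing_fun (rearr X).
Proof.
move=> w v wv; apply: le_ereal_inf => _ [l [l0 dl] <-]; exists l => //.
by split => //; apply: (le_trans dl); rewrite lee_fin.
Qed.

Lemma int_rearr_ge0 a b : (0 <= int_rearr X a b)%E.
Proof. by apply: integral_ge0 => x _; exact: rearr_ge0. Qed.

Hypothesis mX : measurable_fun (`[0, 1] : set R) X.

Definition absX : measurableTypeR R -> R := (fun w => `|X w|) \_ (`[0, 1] : set R).

Lemma measurable_absX : measurable_fun setT absX.
Proof. exact/(measurable_restrictT _ _).1/measurableT_comp. Qed.

HB.instance Definition _ :=
  isMeasurableFun.Build _ _ _ _ absX measurable_absX.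

Lemma absX_ge0 w : 0 <= absX w.
Proof. by rewrite /absX patchE; case: ifP. Qed.

Lemma expectation_absX :
  ('E_unif01[absX : {RV unif01 >-> R}] = expect (fun w => `|X w|%R))%E.
Proof.
rewrite ge0_expectation_unif01; last exact: absX_ge0.
rewrite /expect; apply: eq_integral => x x01.
by rewrite /= /absX patchE x01.
Qed.

Lemma ccdf_absX r : ccdf (absX : {RV unif01 >-> R}) r = distrib X r.
Proof.
change (unif01 (absX @^-1` `]r, +oo[) = distrib X r); rewrite unif01E; last first.
  by rewrite -[_ @^-1` _]setTI; apply: measurable_absX => //; exact: measurable_itv.
rewrite /distrib setIC; congr (mu _); apply/seteqP; split => w /=.
  by move=> [w01]; rewrite /absX patchE mem_set// in_itv/= andbT.
by move=> [w01 h]; split => //; rewrite /absX patchE mem_set// in_itv/= andbT.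
Qed.

Lemma distrib_nonincreasing : nonincreasing_fun (distrib X).
Proof. by move=> r s rs; rewrite -!ccdf_absX; apply: ccdf_nonincreasing. Qed.

Lemma distrib_fin_num r : distrib X r \is a fin_num.
Proof.
rewrite ge0_fin_numE ?measure_ge0// -ccdf_absX.
by apply: le_lt_trans (ltry 1); apply: probability_le1; exact: measurable_itv.
Qed.

Lemma lt_rearr w r : (w%:E < distrib X r)%E -> (r%:E < rearr X w)%E.
Proof.
rewrite -ccdf_absX => wr.
have [i i0 near_r] := ccdf_right_continuous (open_ereal_gt' wr).
have rs : r < r + i / 2 by rewrite ltrDl divr_gt0.
have ws : (w%:E < distrib X (r + i / 2))%E.
  rewrite -ccdf_absX; apply: near_r => //=.
  rewrite opprD addrA subrr sub0r normrN gtr0_norm ?divr_gt0//.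
  by rewrite ltr_pdivrMr// ltr_pMr// ltr1n.
apply: (@lt_le_trans _ _ (r + i / 2)%:E); first by rewrite lte_fin.
apply/ereal_infP => _ [l [l0 dl] <-]; rewrite lee_fin leNgt; apply/negP => ls.
have := distrib_nonincreasing _ _ (ltW ls); rewrite leNgt => /negP; apply.
exact: le_lt_trans dl ws.
Qed.

Lemma lt_rearrE w r : 0 <= r -> (r%:E < rearr X w)%E = (w%:E < distrib X r)%E.
Proof.
move=> r0; apply/idP/idP; last exact: lt_rearr.
by apply: contraTT; rewrite -!leNgt; exact: rearr_le.
Qed.

Lemma rearr_fin_num w : 0 < w -> rearr X w \is a fin_num.
Proof.
move=> w0; have w0E : (0 < w%:E)%E by rewrite lte_fin.
have [M [_ HM]] := cvg_ccdfy0 (absX : {RV unif01 >-> R}) (open_ereal_lt' w0E).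
pose l := Num.max 0 (M + 1).
have l0 : 0 <= l by rewrite le_max lexx.
have dl : (distrib X l <= w%:E)%E.
  by rewrite -ccdf_absX; apply/ltW/HM; rewrite lt_max orbC ltrDl ltr01.
rewrite ge0_fin_numE ?rearr_ge0//.
exact: le_lt_trans (rearr_le _ _ l0 dl) (ltry _).
Qed.

Lemma measurable_fine_rearr : measurable_fun (`]0, 1] : set R) (fine \o rearr X).
Proof.
apply: nonincreasing_in_measurable => //; first exact: interval_is_interval.
move=> x y; rewrite !inE /= !in_itv /= => /andP[x0 _] /andP[y0 _] xy.
by rewrite fine_le ?rearr_fin_num ?rearr_nonincreasing// (lt_le_trans x0).
Qed.

Lemma measurable_rearr : measurable_fun (`]0, 1] : set R) (rearr X).
Proof.
apply: (eq_measurable_fun (EFin \o (fine \o rearr X))).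
  by move=> x; rewrite inE /= in_itv /= => /andP[x0 _]; rewrite /= fineK ?rearr_fin_num.
by apply/measurable_EFinP; exact: measurable_fine_rearr.
Qed.

(* [rearr X 0] may be [+oo], where [fine] gives junk; restricting to ]0,1]
   only changes a null set. *)
Definition rearrX : measurableTypeR R -> R := (fine \o rearr X) \_ (`]0, 1] : set R).

Lemma measurable_rearrX : measurable_fun setT rearrX.
Proof. exact: (measurable_restrictT _ _).1 measurable_fine_rearr. Qed.

HB.instance Definition _ :=
  isMeasurableFun.Build _ _ _ _ rearrX measurable_rearrX.

Lemma rearrX_ge0 w : 0 <= rearrX w.
Proof. by rewrite /rearrX patchE; case: ifP => // _; rewrite fine_ge0 ?rearr_ge0. Qed.

Lemma expectation_rearrX :
  ('E_unif01[rearrX : {RV unif01 >-> R}] = int_rearr X 0 1)%E.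
Proof.
rewrite ge0_expectation_unif01; last exact: rearrX_ge0.
rewrite /int_rearr -integral_itv_obnd_cbnd; last exact: measurable_rearr.
rewrite -integral_itv_obnd_cbnd; last first.
  by apply/measurable_EFinP; apply: measurable_funS measurable_rearrX.
apply: eq_integral => x; rewrite inE /= in_itv /= => /andP[x0 x1].
rewrite /rearrX patchE mem_set; last by rewrite /= in_itv /= x0 x1.
by rewrite /= fineK ?rearr_fin_num.
Qed.

(* On ]0,1], [rearrX w > r] iff [w < mu{|X| > r}], so the set has measure
   [mu{|X| > r}]. *)
Lemma ccdf_rearrX r : 0 <= r ->
  ccdf (rearrX : {RV unif01 >-> R}) r = distrib X r.
Proof.
move=> r0; change (unif01 (rearrX @^-1` `]r, +oo[) = distrib X r).
rewrite unif01E; last first.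
  by rewrite -[_ @^-1` _]setTI; apply: measurable_rearrX => //; exact: measurable_itv.
set dr := fine (distrib X r).
have drE : distrib X r = dr%:E by rewrite fineK ?distrib_fin_num.
have dr0 : 0 <= dr by rewrite fine_ge0 ?measure_ge0.
have dr1 : dr <= 1.
  rewrite -lee_fin -drE -ccdf_absX; apply: probability_le1; exact: measurable_itv.
transitivity (mu `]0, dr[); last first.
  rewrite lebesgue_measure_itv /= lte_fin drE; case: ltgtP dr0 => //.
  - by rewrite sube0.
  - by move=> <-.
congr (mu _); apply/seteqP; split => w /=.
  move=> [+ w01]; rewrite /rearrX patchE; case: ifPn => [|_]; last first.
    by rewrite in_itv /= andbT ltNge r0.
  rewrite inE /= !in_itv /= andbT => /andP[w0 w1] rw.
  by rewrite w0 -lte_fin -drE -lt_rearrE// -[rearr X w]fineK ?rearr_fin_num.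
rewrite in_itv /= => /andP[w0 wd].
have w1 : w <= 1 by rewrite ltW// (lt_le_trans wd).
split; last by rewrite /= in_itv /= (ltW w0) w1.
rewrite /rearrX patchE mem_set; last by rewrite /= in_itv /= w0 w1.
by rewrite in_itv/= andbT -lte_fin fineK ?rearr_fin_num// lt_rearrE// drE lte_fin.
Qed.

Lemma expect_abs_int_rearr : expect (fun w => `|X w|) = int_rearr X 0 1.
Proof.
rewrite -expectation_absX -expectation_rearrX.
apply: ge0_expectation_eq_ccdf; [exact: absX_ge0|exact: rearrX_ge0|].
by move=> r r0; rewrite ccdf_absX ccdf_rearrX.
Qed.

Lemma int_rearr_split t : 0 < t < 1 ->
  int_rearr X 0 1 = (int_rearr X 0 t + int_rearr X t 1)%E.
Proof.
move=> /andP[t0 t1].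
have [t0' t1'] : (BRight 0 <= BRight t)%O /\ (BRight t <= BRight 1)%O.
  by rewrite !bnd_simp !ltW.
have m1 := measurable_funS (measurable_itv _) (subset_itvl t1') measurable_rearr.
have m2 := measurable_funS (measurable_itv _) (subset_itvr t0') measurable_rearr.
rewrite /int_rearr -integral_itv_obnd_cbnd; last exact: measurable_rearr.
rewrite -(integral_itv_obnd_cbnd m1) -(integral_itv_obnd_cbnd m2).
rewrite (itv_bndbnd_setU t0' t1') ge0_integral_setU //.
- by rewrite -(itv_bndbnd_setU t0' t1'); exact: measurable_rearr.
- by move=> x _; exact: rearr_ge0.
- apply/disj_setPS => x [] /=; rewrite !in_itv /= => /andP[_ xt] /andP[tx _].
  by move: (le_lt_trans xt tx); rewrite ltxx.
Qed.

Lemma marcinkiewicz_term_beta (phi : R -> R) t : 0 < t < 1 -> t <= phi t <= 1 ->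
  ((phi t / t)%:E * int_rearr X 0 t + ((phi t - 1) / (t - 1))%:E * int_rearr X t 1 =
   (beta_of phi (1 - t))%:E * expect (fun w => `|X w|%R)
   + (1 - beta_of phi (1 - t))%:E * CVar (1 - t) (fun w => `|X w|%R))%E.
Proof.
move=> t01 /andP[tp p1]; have /andP[t0 t1] := t01.
rewrite /beta_of /CVar subKr int_rearr_abs expect_abs_int_rearr (int_rearr_split _ t01).
set b := (1 - phi t) / (1 - t).
have t1' : 0 < 1 - t by rewrite subr_gt0.
have b0 : 0 <= b by rewrite divr_ge0 ?subr_ge0// ltW.
have b1 : 0 <= 1 - b by rewrite subr_ge0 ler_pdivrMr// mul1r lerB.
have tb : 0 <= (1 - b) * t^-1 by rewrite mulr_ge0// invr_ge0 ltW.
have -> : phi t / t = b + (1 - b) * t^-1.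
  by rewrite /b; field; rewrite !gt_eqF.
have -> : (phi t - 1) / (t - 1) = b.
  by rewrite /b; field; rewrite gt_eqF// subr_eq0 lt_eqF.
move: (int_rearr X 0 t) (int_rearr X t 1) (int_rearr_ge0 0 t) (int_rearr_ge0 t 1).
move=> A B A0 B0; rewrite ge0_muleDr// muleA -EFinM addeAC -ge0_muleDl ?lee_fin//.
Qed.

End rearrangement.

Lemma concave01_ge_id (R : numDomainType) (phi : R -> R) :
  (forall x y l, 0 <= x <= 1 -> 0 <= y <= 1 -> 0 <= l <= 1 ->
      l * phi x + (1 - l) * phi y <= phi (l * x + (1 - l) * y)) ->
  phi 0 = 0 -> phi 1 = 1 -> forall t, 0 <= t <= 1 -> t <= phi t.
Proof.
move=> phi_concave phi0 phi1 t t01.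
have := phi_concave 1 0 t; rewrite phi0 phi1 !mulr1 !mulr0 !addr0.
by apply; rewrite ?lexx ?ler01.
Qed.

Lemma image_itv01_reflect (R : numDomainType) (T : Type) (f : R -> T) :
  f @` `]0, 1[ = (fun t => f (1 - t)) @` `]0, 1[.
Proof.
have reflect01 t : t \in `]0, 1[ -> 1 - t \in `]0, 1[.
  by rewrite !in_itv/= => /andP[t0 t1]; rewrite subr_gt0 t1 ltrBlDr ltrDl t0.
by apply/seteqP; split => _ [t t01 <-]; exists (1 - t); rewrite ?subKr//= reflect01.
Qed.

Theorem theorem22 (R : realType) (phi : R -> R)
  (phi_range : forall x, 0 <= x <= 1 -> 0 <= phi x <= 1)
  (phi_concave : forall x y l, 0 <= x <= 1 -> 0 <= y <= 1 -> 0 <= l <= 1 ->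
      l * phi x + (1 - l) * phi y <= phi (l * x + (1 - l) * y))
  (phi0 : phi 0 = 0) (phi1 : phi 1 = 1)
  (phi_cont0 : phi x @[x --> 0^'+] --> phi 0)
  (X : R -> R) (mX : measurable_fun (`[0, 1] : set R) X) :
  TM_norm phi X =
    ereal_sup [set ((beta_of phi t)%:E * expect (fun w : R => `|X w|%R)
                    + (1 - beta_of phi t)%:E * CVar t (fun w : R => `|X w|%R))%E
              | t in (`]0, 1[ : set R)]
  /\
  ereal_sup [set ((beta_of phi t)%:E * expect (fun w : R => `|X w|%R)
                  + (1 - beta_of phi t)%:E * CVar t (fun w : R => `|X w|%R))%E
            | t in (`]0, 1[ : set R)]
    = ereal_sup [set RIM t (beta_of phi t) (fun w : R => `|X w|%R) | t in (`]0, 1[ : set R)].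
Proof.
have phi_bounds t : 0 < t < 1 -> t <= phi t <= 1.
  move=> /andP[t0 t1]; have t01 : 0 <= t <= 1 by rewrite !ltW.
  by rewrite concave01_ge_id//; case/andP: (phi_range t t01).
split=> //; rewrite /TM_norm [in RHS]image_itv01_reflect; congr ereal_sup.
apply: eq_imagel => t; rewrite /= in_itv/= => t01.
by rewrite (marcinkiewicz_term_beta _ mX) ?phi_bounds.
Qed.
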